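(* Let $V$ be a finite set, $f:2^V\to\mathbb{R}_+$ nonnegative submodular, $t_1,\ldots,t_k\in V$ distinct terminals, and $\mathbf{x}=(x_{i,j})_{i\in[k],j\in V}$ with $x_{i,j}\ge0$, $\sum_{i=1}^k x_{i,j}=1$ for all $j$, and $x_{i,t_i}=1$ for all $i$. For $\theta\in[0,1]$ define $A_i(\theta)=\{j: x_{i,j}>\theta\}$, $U(\theta)=\{j:\max_i x_{i,j}\le\theta\}$ and $B(\theta)=\{j: 1-\max_i x_{i,j}\ge\theta\}$. Consider the rounding which picks $\theta\in(\tfrac12,1]$ uniformly and $i'\in[k]$ uniformly at random (independently), and assigns $A_i(\theta)$ to terminal $i$ for $i\ne i'$ and $A_{i'}(\theta)\cup U(\theta)$ to terminal $i'$. Then the expected cost $\mathbb{E}[\sum_i f(S_i)]$ of the resulting partition $(S_1,\ldots,S_k)$ equals $$\Big(2-\frac{2}{k}\Big)\sum_{i=1}^k\int_{1/2}^1 f(A_i(\theta))\,d\theta+\frac{2}{k}\sum_{i=1}^k\int_0^{1/2} f(A_i(\theta)\cup B(\theta))\,d\theta.$$ *)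

From HB Require Import structures.
From mathcomp Require Import all_boot all_order all_algebra.
From mathcomp Require Import all_classical all_reals all_analysis.
Set Implicit Arguments. Unset Strict Implicit. Unset Printing Implicit Defensive.
Import Order.TTheory GRing.Theory Num.Theory.
Import numFieldNormedType.Exports.
Local Open Scope ring_scope.

Section Defs.
Context {R : realType} {V : finType} {k : nat}.
Implicit Types (x : 'I_k -> V -> R) (f : {set V} -> R) (theta : R).

Definition nonneg_setfun f := forall S : {set V}, 0 <= f S.
Definition submodular f :=
  forall S T : {set V}, f (S :|: T) + f (S :&: T) <= f S + f T.

Definition feasible_x (t : 'I_k -> V) x :=
  [/\ forall i j, 0 <= x i j,
      forall j, \sum_(i < k) x i j = 1 &
      forall i, x i (t i) = 1].

(* max_i x_{i,j} (x is nonnegative, so the initial value 0 is harmless) *)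
Definition xmax x (j : V) : R := \big[Num.max/0]_(i < k) x i j.

Definition A_set x (i : 'I_k) theta : {set V} := [set j | theta < x i j].
Definition U_set x theta : {set V} := [set j | xmax x j <= theta].
Definition B_set x theta : {set V} := [set j | theta <= 1 - xmax x j].

Definition S_set x theta (i' i : 'I_k) : {set V} :=
  if i == i' then A_set x i theta :|: U_set x theta else A_set x i theta.

Definition round_cost f x theta (i' : 'I_k) : R :=
  \sum_(i < k) f (S_set x theta i' i).

(* Expectation when theta ~ Uniform(1/2, 1] (density 2) and i' ~ Uniform([k]),
   independently. *)
Definition expected_cost f x : R :=
  \sum_(i' < k) k%:R^-1 *
     (\int[@lebesgue_measure R]_(theta in `]2^-1, 1]%classic)
        (2 * round_cost f x theta i')).

End Defs.

(** Exchanging expectation and sum, the cost splits into the terms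
    [2 f(A_i(θ))] for the ordinary terminals and [2 f(A_i'(θ) ∪ U(θ))] for the
    special one, integrated over [θ ∈ (1/2, 1]]; averaging over [i'] gives the
    weights [2 - 2/k] and [2/k].  The reflection [θ ↦ 1 - θ] maps [(1/2, 1]]
    onto [[0, 1/2)], and for [θ ≥ 1/2] it turns [A_i(θ) ∪ U(θ)] into
    [A_i(1-θ) ∪ B(1-θ)]: a node outside [U(θ)] has a unique coordinate above
    [θ ≥ 1/2], since the coordinates sum to one. *)
From HB Require Import structures.
From mathcomp Require Import all_boot all_order all_algebra.
From mathcomp Require Import all_classical all_reals all_analysis.
From mathcomp Require Import ring lra.
Import Order.TTheory GRing.Theory Num.Theory.
Import numFieldNormedType.Exports.
Local Open Scope ring_scope.
Local Open Scope classical_set_scope.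

Section finset_valued.
Context d (T : measurableType d) (R : realType) (V : finType).
Variable mu : {measure set T -> \bar R}.

Lemma measurable_mem_setU (G1 G2 : T -> {set V}) j :
  measurable [set t | j \in G1 t] -> measurable [set t | j \in G2 t] ->
  measurable [set t | j \in G1 t :|: G2 t].
Proof.
move=> m1 m2; rewrite (_ : [set t | _] =
  [set t | j \in G1 t] `|` [set t | j \in G2 t]); first exact: measurableU.
by apply/seteqP; split => t /=; rewrite finset.in_setU => /orP.
Qed.

Variable G : T -> {set V}.
Hypothesis mG : forall j, measurable [set t | j \in G t].

Lemma measurable_finset_fiber (S : {set V}) : measurable [set t | G t = S].
Proof.
have -> : [set t | G t = S] =
    \bigcap_(j in [set: V]) [set t | (j \in G t) = (j \in S)].
  apply/seteqP; split => t /=; first by move=> GS j _; rewrite /= GS.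
  by move=> GS; apply/setP => j; exact: GS.
apply: fin_bigcap_measurable; first exact: finite_finset.
move=> j _; case: (j \in S).
  by rewrite (_ : [set t | _ = true] = [set t | j \in G t]).
rewrite (_ : [set t | _ = false] = ~` [set t | j \in G t]).
  exact: measurableC.
by apply/seteqP; split => t /=; case: (j \in G t).
Qed.

Lemma measurable_fun_finset_comp (D : set T) (F : {set V} -> R) :
  measurable_fun D (F \o G).
Proof.
move=> mD Y mY; have -> : (F \o G) @^-1` Y =
    \bigcup_(S in [set S : {set V} | Y (F S)]) [set t | G t = S].
  apply/seteqP; split => t /=; first by exists (G t).
  by case=> S /= YS ->.
apply: measurableI => //; apply: fin_bigcup_measurable.
  exact: finite_finset.
by move=> S _; exact: measurable_finset_fiber.
Qed.

Lemma integrable_finset_comp (D : set T) (F : {set V} -> R) :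
  measurable D -> (mu D < +oo)%E -> mu.-integrable D (EFin \o (F \o G)).
Proof.
move=> mD Dfin; apply: measurable_bounded_integrable => //.
  exact: measurable_fun_finset_comp.
exists (\sum_S `|F S|); split; first by rewrite num_real.
move=> M ltM t _; apply/ltW/le_lt_trans/ltM.
by rewrite (bigD1 (G t)) //= ler_wpDr ?sumr_ge0.
Qed.

End finset_valued.

Section Rintegral_sum.
Context d (T : measurableType d) (R : realType).
Variables (mu : {measure set T -> \bar R}) (D : set T) (I : Type).
Variable h : I -> T -> R.
Hypothesis mD : measurable D.
Hypothesis ih : forall i, mu.-integrable D (EFin \o h i).

Lemma integrable_Rsum (s : seq I) :
  mu.-integrable D (EFin \o (fun t => \sum_(i <- s) h i t)).
Proof.
apply: (eq_integrable mD (fun t => \sum_(i <- s) (h i t)%:E)%E).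
  by move=> t _; rewrite /= sumEFin.
by apply: (integrable_sum mD) => i _; exact: ih.
Qed.

Lemma Rintegral_sum (s : seq I) :
  \int[mu]_(t in D) (\sum_(i <- s) h i t) =
  \sum_(i <- s) \int[mu]_(t in D) h i t.
Proof.
elim: s => [|i s IHs].
  by under eq_fun do rewrite big_nil; rewrite big_nil /Rintegral integral0.
under eq_fun do rewrite big_cons.
by rewrite big_cons RintegralD // ?IHs //; exact: integrable_Rsum.
Qed.

End Rintegral_sum.

Lemma lebesgue_measure_itv_lty {R : realType} (a b : R) (ba bb : bool) :
  (@lebesgue_measure R [set` Interval (BSide ba a) (BSide bb b)] < +oo)%E.
Proof. by rewrite lebesgue_measure_itv /=; case: ifP => _; rewrite ?ltry. Qed.

Section lebesgue_reflection.
Context {R : realType}.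
Notation mu := (@lebesgue_measure R).
Variable c : R.

Let refl (t : R) : R := c - t.

Let measurable_refl : measurable_fun [set: R] refl.
Proof.
by apply: measurable_realfun.measurable_funB; [exact: measurable_cst|].
Qed.

Lemma pushforward_lebesgue_reflect (A : set R) : measurable A ->
  pushforward mu (refl : _ -> measurableTypeR R) A = mu A.
Proof.
move=> mA; apply/esym/lebesgue_measure_unique => //= _ [[a b]] _ <-.
rewrite /pushforward.
have -> : refl @^-1` `]a, b] = `[c - b, c - a[.
  by apply/seteqP; split => t /=; rewrite /refl !in_itv /= => /andP[? ?];
    apply/andP; split; lra.
rewrite !lebesgue_measure_itv /= !lte_fin ltrD2l ltrN2.
by case: ifP => // _; rewrite -!EFinD; congr EFin; lra.
Qed.

Lemma ge0_Rintegral_reflect (a b : R) (g : R -> R) : (forall t, 0 <= g t) ->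
  measurable_fun `[a, b] g ->
  \int[mu]_(t in `[a, b]) g t = \int[mu]_(t in `[c - b, c - a]) g (c - t).
Proof.
move=> g0 mg; rewrite /Rintegral; congr fine.
have -> : `[c - b, c - a] = (refl : _ -> measurableTypeR R) @^-1` `[a, b].
  by apply/seteqP; split => t /=; rewrite /refl !in_itv /= => /andP[? ?];
    apply/andP; split; lra.
transitivity (\int[pushforward mu (refl : _ -> measurableTypeR R)]_(y in `[a, b])
    (g y)%:E)%E.
  apply/esym/eq_measure_integral => //= A mA _.
  by rewrite pushforward_lebesgue_reflect.
rewrite ge0_integral_pushforward //; last by move=> y _; rewrite lee_fin.
exact/measurable_realfun.measurable_EFinP.
Qed.

End lebesgue_reflection.

Section threshold_sets.
Context (R : realType) (V : finType) (k : nat).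
Variable x : 'I_k -> V -> R.

Lemma lt_xmax_exists (th : R) (j : V) :
  0 <= th -> th < xmax x j -> exists i, th < x i j.
Proof.
move=> th0; rewrite /xmax; elim/big_ind: _ => //.
- by move=> lt_th0; lra.
- by move=> a b ha hb; rewrite lt_max => /orP[/ha|/hb].
- by move=> i _ lt_th; exists i.
Qed.

Lemma measurable_mem_A_set i j : measurable [set th : R | j \in A_set x i th].
Proof.
rewrite (_ : [set th | _] = `]-oo, x i j[); first exact: measurable_itv.
by apply/seteqP; split => th /=; rewrite /A_set inE in_itv.
Qed.

Lemma measurable_mem_U_set j : measurable [set th : R | j \in U_set x th].
Proof.
rewrite (_ : [set th | _] = `[xmax x j, +oo[); first exact: measurable_itv.
by apply/seteqP; split => th /=; rewrite /U_set inE in_itv /= andbT.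
Qed.

Lemma measurable_mem_B_set j : measurable [set th : R | j \in B_set x th].
Proof.
rewrite (_ : [set th | _] = `]-oo, 1 - xmax x j]); first exact: measurable_itv.
by apply/seteqP; split => th /=; rewrite /B_set inE in_itv.
Qed.

Lemma A_setU_B_set_reflect (i : 'I_k) (th : R) :
  (forall i j, 0 <= x i j) -> (forall j, \sum_(l < k) x l j = 1) ->
  2^-1 <= th ->
  A_set x i (1 - th) :|: B_set x (1 - th) = A_set x i th :|: U_set x th.
Proof.
move=> x0 x_sum1 th_ge; apply/setP => j; rewrite !inE lerD2l lerN2.
case: (leP (xmax x j) th) => [_|lt_th_max]; rewrite ?orbT // !orbF.
apply/idP/idP => [lt_1th|]; last by lra.
have [l lt_th] : exists l, th < x l j by apply: lt_xmax_exists => //; lra.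
have [<- //|neq_li] := eqVneq l i.
suff : x i j + x l j <= 1 by lra.
rewrite -(x_sum1 j) (bigD1 i) //= lerD2l (bigD1 l) //= ler_wpDr ?sumr_ge0 //.
Qed.

End threshold_sets.

Lemma mean_replace_one (F : numFieldType) (k : nat) (c : F) (a u : 'I_k -> F) :
  \sum_(i' < k) k%:R^-1 * (c * (\sum_(i < k) a i - a i' + u i')) =
  (c - c / k%:R) * \sum_(i < k) a i + c / k%:R * \sum_(i < k) u i.
Proof.
case: k a u => [|n] a u; first by rewrite !big_ord0 invr0; ring.
rewrite -mulr_sumr -mulr_sumr !big_split /= sumrN sumr_const card_ord.
have n1_neq0 : n.+1%:R != 0 :> F by rewrite pnatr_eq0.
by rewrite -mulr_natl; field.
Qed.

Section rounding.
Context (R : realType) (V : finType) (k : nat).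
Notation mu := (@lebesgue_measure R).
Variables (f : {set V} -> R) (x : 'I_k -> V -> R).

Lemma measurable_mem_S_set (i' i : 'I_k) (j : V) :
  measurable [set th : R | j \in S_set x th i' i].
Proof.
rewrite /S_set; case: (i == i'); last exact: measurable_mem_A_set.
by apply: measurable_mem_setU;
  [exact: measurable_mem_A_set|exact: measurable_mem_U_set].
Qed.

Lemma Rintegral_round_cost (D : set R) (i' : 'I_k) :
  measurable D -> (mu D < +oo)%E ->
  \int[mu]_(th in D) round_cost f x th i' =
  \sum_(i < k) \int[mu]_(th in D) f (A_set x i th)
  - \int[mu]_(th in D) f (A_set x i' th)
  + \int[mu]_(th in D) f (A_set x i' th :|: U_set x th).
Proof.
move=> mD Dfin; rewrite /round_cost Rintegral_sum //; last first.
  move=> i; apply: integrable_finset_comp => // j.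
  exact: measurable_mem_S_set.
rewrite (bigD1 i') //= [in RHS](bigD1 i') //= /S_set eqxx.
rewrite [_ + _ - _]addrC addKr addrC; congr (_ + _).
by apply: eq_bigr => i /negbTE ->.
Qed.

Lemma Rintegral_A_setU_U_set (i : 'I_k) :
  nonneg_setfun f -> (forall i j, 0 <= x i j) ->
  (forall j, \sum_(l < k) x l j = 1) ->
  \int[mu]_(th in `]2^-1, 1]) f (A_set x i th :|: U_set x th) =
  \int[mu]_(th in `[0, 2^-1]) f (A_set x i th :|: B_set x th).
Proof.
move=> f0 x0 x_sum1.
rewrite Rintegral_itv_obnd_cbnd; last first.
  apply: integrable_finset_comp;
    [|exact: measurable_itv|exact: lebesgue_measure_itv_lty].
  by move=> j; apply: measurable_mem_setU;
    [exact: measurable_mem_A_set|exact: measurable_mem_U_set].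
rewrite [RHS](ge0_Rintegral_reflect 1) //; last first.
  apply: measurable_fun_finset_comp => j.
  by apply: measurable_mem_setU;
    [exact: measurable_mem_A_set|exact: measurable_mem_B_set].
have -> : 1 - 2^-1 = 2^-1 :> R by field.
rewrite subr0; apply: eq_Rintegral => th.
rewrite inE /= in_itv /= => /andP[th_ge _].
by rewrite A_setU_B_set_reflect.
Qed.

End rounding.

Theorem lemma2 (R : realType) (V : finType) (k : nat)
  (f : {set V} -> R) (t : 'I_k -> V) (x : 'I_k -> V -> R) :
  nonneg_setfun f -> submodular f -> injective t -> feasible_x t x ->
  expected_cost f x =
    (2 - 2 / k%:R) *
      \sum_(i < k) (\int[@lebesgue_measure R]_(theta in `[2^-1, 1]%classic)
                      f (A_set x i theta))
    + 2 / k%:R *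
      \sum_(i < k) (\int[@lebesgue_measure R]_(theta in `[0, 2^-1]%classic)
                      f (A_set x i theta :|: B_set x theta)).
Proof.
move=> f0 _ _ [x0 x_sum1 _].
have mD : measurable (`]2^-1, 1] : set R) by exact: measurable_itv.
have Dfin := lebesgue_measure_itv_lty (2^-1 : R) 1 false false.
have integrable_A i : (@lebesgue_measure R).-integrable `]2^-1, 1]
    (EFin \o (fun th => f (A_set x i th))).
  by apply: integrable_finset_comp => // j; exact: measurable_mem_A_set.
pose a i := \int[@lebesgue_measure R]_(th in `]2^-1, 1]) f (A_set x i th).
pose u i := \int[@lebesgue_measure R]_(th in `]2^-1, 1])
  f (A_set x i th :|: U_set x th).
transitivity (\sum_(i' < k) k%:R^-1 * (2 * (\sum_(i < k) a i - a i' + u i'))).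
  apply: eq_bigr => i' _; rewrite RintegralZl ?Rintegral_round_cost //.
  apply: integrable_Rsum => // i.
  by apply: integrable_finset_comp => // j; exact: measurable_mem_S_set.
rewrite mean_replace_one; congr (_ * _ + _ * _); apply: eq_bigr => i _.
  exact: Rintegral_itv_obnd_cbnd.
exact: Rintegral_A_setU_U_set.
Qed.
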